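(* Let $A$ be a word-topic matrix, $\delta\ge0$, $B$ a $\delta$-biased minimum variance inverse of $A$, and let $x^*\in\mathcal{S}_k$ be $r$-sparse. Let $\epsilon>4\delta r$ and suppose $n\ge 64\,\lambda_\delta(A)^2r^2\log k/\epsilon^2$. If $y$ is a document of $n$ words generated from $x^*$, then with probability at least $1-2/k$ the output $x$ of the Thresholded Linear Inverse algorithm on input $(y,B)$ satisfies $\|x-x^*\|_1\le\epsilon$.
   Context: A word-topic matrix is a matrix $A\in\mathbb{R}^{D\times k}$ with nonnegative entries whose columns each sum to $1$. $\mathcal{S}_k=\{z\in\mathbb{R}^k_{\ge0}:\sum_i z_i=1\}$. A document of $n$ words generated from $x\in\mathcal{S}_k$ consists of words drawn i.i.d. from the categorical distribution on $[D]$ with probabilities $Ax$; its count vector $y\in\mathbb{R}^D$ records how many times each word occurs. For a matrix $M$, $\|M\|_{\max}=\max_{i,j}|M_{ij}|$. $\lambda_\delta(A)$ is the optimal value of: minimize $\|B\|_{\max}$ over $B\in\mathbb{R}^{k\times D}$ subject to $\|BA-I_k\|_{\max}\le\delta$; a $\delta$-biased minimum variance inverse is a matrix $B$ with $\|BA-I_k\|_{\max}\le\delta$ and $\|B\|_{\max}=\lambda_\delta(A)$. The Thresholded Linear Inverse algorithm, given $y$ and $B$: computes $\hat x=\frac1n By$; sets $\tau=2\lambda_\delta(A)\sqrt{(\log k)/n}+\delta$; outputs $x\in\mathbb{R}^k$ with $x_i=0$ if $\hat x_i<\tau$ and $x_i=\hat x_i$ otherwise. A vector is $r$-sparse if it has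 at most $r$ nonzero entries. *)

From Stdlib Require Import Reals.
From mathcomp Require Import all_boot.

Set Implicit Arguments.
Unset Strict Implicit.
Unset Printing Implicit Defensive.

Local Open Scope R_scope.

Definition Rsum (I : finType) (F : I -> R) : R := \big[Rplus/0]_(i : I) F i.
Definition Rprod (I : finType) (F : I -> R) : R := \big[Rmult/1]_(i : I) F i.
Definition Rmaxf (I : finType) (F : I -> R) : R := \big[Rmax/0]_(i : I) F i.

Definition mx (m p : nat) := 'I_m -> 'I_p -> R.

Definition maxnorm (m p : nat) (M : mx m p) : R :=
  Rmaxf (fun ij : 'I_m * 'I_p => Rabs (M ij.1 ij.2)).

Definition mxmul (m q p : nat) (M : mx m q) (N : mx q p) : mx m p :=
  fun i j => Rsum (fun l : 'I_q => M i l * N l j).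

Definition idmx (k : nat) : mx k k := fun i j => if i == j then 1 else 0.

Definition mxsub (m p : nat) (M N : mx m p) : mx m p := fun i j => M i j - N i j.

Definition word_topic (D k : nat) (A : mx D k) : Prop :=
  (forall i j, 0 <= A i j) /\ (forall j, Rsum (fun i : 'I_D => A i j) = 1).

Definition in_simplex (k : nat) (x : 'I_k -> R) : Prop :=
  (forall i, 0 <= x i) /\ Rsum x = 1.

Definition sparse (k r : nat) (x : 'I_k -> R) : Prop :=
  exists S : {set 'I_k}, (#|S| <= r)%N /\ (forall i, i \notin S -> x i = 0).

Definition feasible (D k : nat) (A : mx D k) (delta : R) (B : mx k D) : Prop :=
  maxnorm (mxsub (mxmul B A) (@idmx k)) <= delta.

Definition is_glb_R (E : R -> Prop) (l : R) : Prop :=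
  (forall v, E v -> l <= v) /\ (forall m, (forall v, E v -> m <= v) -> m <= l).

Definition is_lambda_delta (D k : nat) (A : mx D k) (delta l : R) : Prop :=
  is_glb_R (fun v => exists B : mx k D, feasible A delta B /\ v = maxnorm B) l.

(* delta-biased minimum variance inverse (relative to the value l = lambda_delta(A)) *)
Definition min_var_inverse (D k : nat) (A : mx D k) (delta l : R) (B : mx k D) : Prop :=
  feasible A delta B /\ maxnorm B = l.

Definition word_prob (D k : nat) (A : mx D k) (x : 'I_k -> R) (j : 'I_D) : R :=
  Rsum (fun t : 'I_k => A j t * x t).

Definition doc_prob (D k n : nat) (A : mx D k) (x : 'I_k -> R)
  (w : {ffun 'I_n -> 'I_D}) : R :=
  Rprod (fun i : 'I_n => word_prob A x (w i)).

Definition counts (D n : nat) (w : {ffun 'I_n -> 'I_D}) (j : 'I_D) : R :=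
  INR #|[set i : 'I_n | w i == j]|.

Definition TLI (D k : nat) (n : nat) (B : mx k D) (l delta : R)
  (y : 'I_D -> R) : 'I_k -> R :=
  fun i =>
    let xhat := / INR n * Rsum (fun j : 'I_D => B i j * y j) in
    let tau := 2 * l * sqrt (ln (INR k) / INR n) + delta in
    if Rlt_dec xhat tau then 0 else xhat.

Definition l1dist (k : nat) (x z : 'I_k -> R) : R :=
  Rsum (fun i : 'I_k => Rabs (x i - z i)).

Definition success_prob (D k n : nat) (A : mx D k) (B : mx k D) (l delta eps : R)
  (xs : 'I_k -> R) : R :=
  Rsum (fun w : {ffun 'I_n -> 'I_D} =>
    doc_prob A xs w *
    (if Rle_dec (l1dist (TLI n B l delta (counts w)) xs) eps then 1 else 0)).

(* Coordinate i of the linear estimate B y / n is the empirical mean of n i.i.d. copies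
   of B_{i,w}, w drawn from A xs; this variable is bounded by lambda = lambda_delta(A),
   and its mean (B A xs)_i is within delta of xs_i because ||BA - I||_max <= delta.
   Hoeffding's inequality (from the two-point bound
   cosh u + q sinh u <= exp (q u + u^2 / 2) for |q| <= 1) shows that the empirical mean
   deviates from its mean by t = 2 lambda sqrt (log k / n) with probability at most
   2 exp (-2 log k) = 2 / k^2, so by a union bound all k coordinates are within
   tau = t + delta of xs except with probability 2 / k.  On that event thresholding at
   tau zeroes every coordinate outside the support of xs and moves each of the at most
   r others by at most 2 tau, and 2 r tau <= eps by the choice of n.  When lambda = 0,
   B vanishes, which forces delta >= 1 and makes every document good. *)

From Stdlib Require Import Reals Lra Psatz.
From Stdlib Require Import Classical ClassicalEpsilon FunctionalExtensionality.
From Coquelicot Require Import Coquelicot.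
From HB Require Import structures.
From mathcomp Require Import all_boot.

Set Implicit Arguments.
Unset Strict Implicit.
Unset Printing Implicit Defensive.

Local Open Scope R_scope.

HB.instance Definition _ := Monoid.isComLaw.Build R 0 Rplus
  (fun x y z => esym (Rplus_assoc x y z)) Rplus_comm Rplus_0_l.
HB.instance Definition _ := Monoid.isComLaw.Build R 1 Rmult
  (fun x y z => esym (Rmult_assoc x y z)) Rmult_comm Rmult_1_l.
HB.instance Definition _ := Monoid.isMulLaw.Build R 0 Rmult Rmult_0_l Rmult_0_r.
HB.instance Definition _ :=
  Monoid.isAddLaw.Build R Rmult Rplus Rmult_plus_distr_r Rmult_plus_distr_l.

Section FiniteSums.
Variable I : finType.
Implicit Types (F G : I -> R) (c : R).

Lemma Rsum_ext F G : (forall i, F i = G i) -> Rsum F = Rsum G.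
Proof. by move=> FG; apply: eq_bigr. Qed.

Lemma Rsum_plus F G : Rsum (fun i => F i + G i) = Rsum F + Rsum G.
Proof. exact: big_split. Qed.

Lemma Rsum_scal c F : Rsum (fun i => c * F i) = c * Rsum F.
Proof. by rewrite /Rsum big_distrr. Qed.

Lemma Rsum_opp F : Rsum (fun i => - F i) = - Rsum F.
Proof. by rewrite (Rsum_ext (G := fun i => -1 * F i)) ?Rsum_scal => [|i]; ring. Qed.

Lemma Rsum_minus F G : Rsum (fun i => F i - G i) = Rsum F - Rsum G.
Proof. by rewrite /Rminus -Rsum_opp -Rsum_plus. Qed.

Lemma Rsum_le F G : (forall i, F i <= G i) -> Rsum F <= Rsum G.
Proof.
move=> FG; rewrite /Rsum; elim/big_rec2: _ => [|i x y _ xy]; first exact: Rle_refl.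
exact: Rplus_le_compat.
Qed.

Lemma Rsum_ge0 F : (forall i, 0 <= F i) -> 0 <= Rsum F.
Proof.
move=> F0; rewrite -(Rmult_0_l (Rsum F)) -Rsum_scal.
by apply: Rsum_le => i; rewrite Rmult_0_l.
Qed.

Lemma Rsum_ge_term F i0 : (forall i, 0 <= F i) -> F i0 <= Rsum F.
Proof.
move=> F0; rewrite /Rsum (bigD1 i0) //=.
have : 0 <= \big[Rplus/0]_(i | i != i0) F i.
  by elim/big_rec: _ => [|i x _ x0]; [exact: Rle_refl | have := F0 i; lra].
lra.
Qed.

Lemma Rsum_indicator (S : {set I}) c :
  Rsum (fun i => if i \in S then c else 0) = INR #|S| * c.
Proof.
rewrite /Rsum -big_mkcond big_const; elim: #|S| => [|m IH] /=; first ring.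
by rewrite IH -/(INR m.+1) S_INR; ring.
Qed.

Lemma Rsum_const c : Rsum (fun _ : I => c) = INR #|I| * c.
Proof. by rewrite -cardsT -Rsum_indicator; apply: Rsum_ext => i; rewrite in_setT. Qed.

Lemma Rsum_kronecker (x : I -> R) i :
  Rsum (fun t => (if i == t then 1 else 0) * x t) = x i.
Proof.
rewrite /Rsum (bigD1 i) //= eqxx big1 => [|t ti]; first ring.
by rewrite eq_sym (negbTE ti); ring.
Qed.

Lemma Rprod_mult F G : Rprod (fun i => F i * G i) = Rprod F * Rprod G.
Proof. exact: big_split. Qed.

Lemma Rprod_ge0 F : (forall i, 0 <= F i) -> 0 <= Rprod F.
Proof.
move=> F0; rewrite /Rprod; elim/big_rec: _ => [|i x _ x0]; first lra.
exact: Rmult_le_pos.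
Qed.

Lemma exp_Rsum F : exp (Rsum F) = Rprod (fun i => exp (F i)).
Proof. by rewrite /Rsum /Rprod (big_morph _ exp_plus exp_0). Qed.

End FiniteSums.

Lemma Rsum_swap (I J : finType) (F : I -> J -> R) :
  Rsum (fun i => Rsum (fun j => F i j)) = Rsum (fun j => Rsum (fun i => F i j)).
Proof. exact: exchange_big. Qed.

Lemma Rprod_const_ord (n : nat) (a : R) : Rprod (fun _ : 'I_n => a) = a ^ n.
Proof. by rewrite /Rprod big_const_ord; elim: n => //= n ->. Qed.

Lemma Rsum_ffun_Rprod (J : finType) (n : nat) (g : J -> R) :
  Rsum (fun w : {ffun 'I_n -> J} => Rprod (fun m => g (w m))) = Rsum g ^ n.
Proof.
by rewrite -Rprod_const_ord /Rsum /Rprod (bigA_distr_bigA (fun (_ : 'I_n) j => g j)).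
Qed.

Lemma Rmaxf_ge (I : finType) (F : I -> R) i : F i <= Rmaxf F.
Proof.
rewrite /Rmaxf; have : i \in index_enum I by rewrite mem_index_enum.
elim: (index_enum I) => [//|a s IH]; rewrite in_cons big_cons.
case/orP => [/eqP <-|/IH Fi]; first exact: Rmax_l.
exact: Rle_trans Fi (Rmax_r _ _).
Qed.

Lemma Rmaxf_ge0 (I : finType) (F : I -> R) : 0 <= Rmaxf F.
Proof.
rewrite /Rmaxf; elim/big_rec: _ => [|i x _ x0]; first exact: Rle_refl.
exact: Rle_trans x0 (Rmax_r _ _).
Qed.

Lemma maxnorm_ge_entry (m q : nat) (M : mx m q) i j : Rabs (M i j) <= maxnorm M.
Proof. exact: (Rmaxf_ge (fun ij : 'I_m * 'I_q => Rabs (M ij.1 ij.2)) (i, j)). Qed.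

Lemma maxnorm_ge0 (m q : nat) (M : mx m q) : 0 <= maxnorm M.
Proof. exact: Rmaxf_ge0. Qed.

Definition is_distr (I : finType) (p : I -> R) : Prop :=
  (forall i, 0 <= p i) /\ Rsum p = 1.

Definition expect (I : finType) (p F : I -> R) : R := Rsum (fun i => p i * F i).

Definition Pr (I : finType) (p : I -> R) (E : I -> Prop) : R :=
  expect p (fun i => if excluded_middle_informative (E i) then 1 else 0).

Lemma is_distr_ord_gt0 (k : nat) (x : 'I_k -> R) : is_distr x -> (0 < k)%N.
Proof. by case: k x => // x [_]; rewrite /Rsum big_ord0; lra. Qed.

Section Expectation.
Variables (I : finType) (p : I -> R).
Hypothesis p_distr : is_distr p.
Implicit Types (F G : I -> R) (P Q : I -> Prop).

Lemma expect_plus F G : expect p (fun i => F i + G i) = expect p F + expect p G.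
Proof. by rewrite /expect -Rsum_plus; apply: Rsum_ext => i; ring. Qed.

Lemma expect_scal c F : expect p (fun i => c * F i) = c * expect p F.
Proof. by rewrite /expect -Rsum_scal; apply: Rsum_ext => i; ring. Qed.

Lemma expect_opp F : expect p (fun i => - F i) = - expect p F.
Proof. by rewrite /expect -Rsum_opp; apply: Rsum_ext => i; ring. Qed.

Lemma expect_Rsum (J : finType) (F : J -> I -> R) :
  expect p (fun i => Rsum (fun j => F j i)) = Rsum (fun j => expect p (F j)).
Proof.
rewrite /expect -Rsum_swap; apply: Rsum_ext => i.
by rewrite -Rsum_scal.
Qed.

Lemma expect_const c : expect p (fun _ => c) = c.
Proof.
by rewrite /expect (Rsum_ext (G := fun i => c * p i)) ?Rsum_scal ?p_distr.2 => [|i]; ring.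
Qed.

Lemma expect_le F G : (forall i, F i <= G i) -> expect p F <= expect p G.
Proof.
by move=> FG; apply: Rsum_le => i; apply: Rmult_le_compat_l; [apply: p_distr.1 |].
Qed.

Lemma expect_ge0 F : (forall i, 0 <= F i) -> 0 <= expect p F.
Proof. by move=> F0; rewrite -(expect_const 0); apply: expect_le. Qed.

Lemma expect_abs_le F c : (forall i, Rabs (F i) <= c) -> Rabs (expect p F) <= c.
Proof.
move=> Fc; apply: Rabs_le; split.
- by rewrite -(expect_const (- c)); apply: expect_le => i; have := Fc i; split_Rabs; lra.
- by rewrite -(expect_const c); apply: expect_le => i; have := Fc i; split_Rabs; lra.
Qed.

Lemma Pr_le_expect P F :
  (forall i, 0 <= F i) -> (forall i, P i -> 1 <= F i) -> Pr p P <= expect p F.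
Proof.
move=> F0 PF; apply: expect_le => i.
by case: excluded_middle_informative => [/PF|_] //; apply: F0.
Qed.

Lemma Pr_mono P Q : (forall i, P i -> Q i) -> Pr p P <= Pr p Q.
Proof.
move=> PQ; apply: Pr_le_expect => i.
  by case: excluded_middle_informative => /= _; lra.
by case: excluded_middle_informative => /= [_ _|nQ /PQ Qi]; [lra | case: nQ].
Qed.

Lemma Pr_or P Q : Pr p (fun i => P i \/ Q i) <= Pr p P + Pr p Q.
Proof.
rewrite -expect_plus; apply: Pr_le_expect => i.
  by do 2 case: excluded_middle_informative => /= _; lra.
by case=> [Pi|Qi]; do 2 case: excluded_middle_informative => //= _; lra.
Qed.

Lemma Pr_exists (J : finType) (E : J -> I -> Prop) :
  Pr p (fun i => exists j, E j i) <= Rsum (fun j => Pr p (E j)).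
Proof.
rewrite /Pr -expect_Rsum; apply: Pr_le_expect => [i|i [j Eji]].
  by apply: Rsum_ge0 => j; case: excluded_middle_informative => /= _; lra.
have ind_ge0 j' : 0 <= (if excluded_middle_informative (E j' i) then 1 else 0).
  by case: excluded_middle_informative => /= _; lra.
have := Rsum_ge_term j ind_ge0.
by case: excluded_middle_informative.
Qed.

Lemma Pr_compl P : Pr p P = 1 - Pr p (fun i => ~ P i).
Proof.
suff : Pr p P + Pr p (fun i => ~ P i) = 1 by lra.
rewrite -expect_plus -[RHS](expect_const 1); apply: Rsum_ext => i.
by do 2 case: excluded_middle_informative => /=; try tauto; intros; ring.
Qed.

Lemma Pr_none P : (forall i, ~ P i) -> Pr p P = 0.
Proof.
move=> nP; rewrite -(expect_const 0); apply: Rsum_ext => i.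
by case: excluded_middle_informative => // Pi; case: (nP i).
Qed.

End Expectation.

Definition iid (J : finType) (n : nat) (p : J -> R) (w : {ffun 'I_n -> J}) : R :=
  Rprod (fun m => p (w m)).
Arguments iid {J} n p w.

Definition emp_mean (J : finType) (n : nat) (Y : J -> R) (w : {ffun 'I_n -> J}) : R :=
  / INR n * Rsum (fun m => Y (w m)).

Lemma iid_distr (J : finType) (n : nat) (p : J -> R) : is_distr p -> is_distr (iid n p).
Proof.
case=> p0 p1; split; first by move=> w; apply: Rprod_ge0.
by rewrite Rsum_ffun_Rprod p1 pow1.
Qed.

Lemma expect_iid_exp (J : finType) (n : nat) (p Y : J -> R) (s : R) :
  expect (iid n p) (fun w => exp (s * Rsum (fun m => Y (w m)))) =
  expect p (fun j => exp (s * Y j)) ^ n.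
Proof.
rewrite -Rsum_ffun_Rprod; apply: Rsum_ext => w.
by rewrite -Rsum_scal exp_Rsum -Rprod_mult.
Qed.

Lemma exp_le_compat (x y : R) : x <= y -> exp x <= exp y.
Proof. by case=> [/exp_increasing/Rlt_le | ->] //; apply: Rle_refl. Qed.

Lemma exp_tangent_le (x y : R) : exp x * (1 + (y - x)) <= exp y.
Proof.
have -> : exp y = exp x * exp (y - x) by rewrite -exp_plus; f_equal; ring.
by apply: Rmult_le_compat_l; [exact/Rlt_le/exp_pos | exact: exp_ineq1_le].
Qed.

Lemma exp_pow_INR (x : R) (n : nat) : exp x ^ n = exp (INR n * x).
Proof.
elim: n => [|n IH] /=; first by rewrite Rmult_0_l exp_0.
by rewrite IH -exp_plus -/(INR n.+1) S_INR; f_equal; ring.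
Qed.

Lemma derive_nonneg_le (f df : R -> R) (u : R) :
  (forall x, is_derive f x (df x)) -> (forall x, 0 <= x -> 0 <= df x) ->
  0 <= u -> f 0 <= f u.
Proof.
move=> f' df0 u0.
have [c [c0u fu]] : exists c, Rmin 0 u <= c <= Rmax 0 u /\ f u - f 0 = df c * (u - 0).
  apply: MVT_gen => x _; first exact: f'.
  apply/continuity_pt_filterlim/(ex_derive_continuous (V := R_NormedModule)).
  by eexists; apply: f'.
rewrite Rmin_left in c0u; last lra.
by have := df0 c (proj1 c0u); nra.
Qed.

(* The moment generating function of the {-1, 1}-valued variable with mean [q]. *)
Definition twopt_mgf (q u : R) : R := (1 - q) / 2 * exp (- u) + (1 + q) / 2 * exp u.

Definition twopt_dmgf (q u : R) : R := (1 + q) / 2 * exp u - (1 - q) / 2 * exp (- u).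

Lemma twopt_mgf_pos (q u : R) : Rabs q <= 1 -> 0 < twopt_mgf q u.
Proof.
move/Rabs_le_between=> q1; rewrite /twopt_mgf.
have := exp_pos u; have := exp_pos (- u).
by case: (Req_dec q 1) => [->|]; nra.
Qed.

Lemma exp_le_twopt_mgf (q u : R) : Rabs q <= 1 -> exp (q * u) <= twopt_mgf q u.
Proof.
move/Rabs_le_between=> q1; rewrite /twopt_mgf.
have := exp_tangent_le (q * u) (- u); have := exp_tangent_le (q * u) u.
have := exp_pos (q * u); nra.
Qed.

Lemma twopt_mgf_le_exp (q u : R) : Rabs q <= 1 -> 0 <= u ->
  twopt_mgf q u <= exp (q * u + u ^ 2 / 2).
Proof.
move=> q1 u0; have mgf0 x := twopt_mgf_pos x q1.
pose slope x := q + x - twopt_dmgf q x / twopt_mgf q x.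
pose gap x := q * x + x ^ 2 / 2 - ln (twopt_mgf q x).
(* [gap] vanishes at 0 with derivative [slope], which vanishes at 0 with a square
   as derivative. *)
have slope0 x : 0 <= x -> 0 <= slope x.
  move=> x0; have <- : slope 0 = 0.
    by rewrite /slope /twopt_mgf /twopt_dmgf Ropp_0 exp_0; field_simplify; lra.
  pose dslope y := (twopt_dmgf q y / twopt_mgf q y) ^ 2.
  apply: (derive_nonneg_le (df := dslope)) => // [y|y _]; last exact: pow2_ge_0.
  have := mgf0 y; rewrite /slope /dslope /twopt_mgf /twopt_dmgf => ?.
  by auto_derive; [lra | field; lra].
have : gap 0 <= gap u.
  apply: (derive_nonneg_le (df := slope)) => // y.
  have := mgf0 y; rewrite /gap /slope /twopt_mgf /twopt_dmgf => ?.
  by auto_derive; [lra | field; lra].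
have -> : gap 0 = 0.
  rewrite /gap /twopt_mgf Ropp_0 exp_0.
  have -> : (1 - q) / 2 * 1 + (1 + q) / 2 * 1 = 1 by field.
  by rewrite ln_1 /=; field.
rewrite /gap => gap_u; rewrite -(exp_ln _ (mgf0 u)); apply: exp_le_compat; lra.
Qed.

Section Hoeffding.
Variables (J : finType) (p Y : J -> R) (c : R).
Hypotheses (p_distr : is_distr p) (c_gt0 : 0 < c) (Y_bounded : forall j, Rabs (Y j) <= c).

Lemma expect_twopt_mgf (u : R) :
  expect p (fun j => twopt_mgf (Y j / c) u) = twopt_mgf (expect p Y / c) u.
Proof.
rewrite /expect (Rsum_ext (G := fun j => (exp (- u) + exp u) / 2 * p j +
  (exp u - exp (- u)) / (2 * c) * (p j * Y j))) => [|j].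
  by rewrite Rsum_plus !Rsum_scal p_distr.2 /twopt_mgf; field; lra.
by rewrite /twopt_mgf; field; lra.
Qed.

Lemma hoeffding_lemma (s : R) : 0 <= s ->
  expect p (fun j => exp (s * Y j)) <= exp (s * expect p Y + (s * c) ^ 2 / 2).
Proof.
move=> s0; have div_c x : Rabs x <= c -> Rabs (x / c) <= 1.
  move=> xc; rewrite Rabs_div; last lra.
  by rewrite (Rabs_pos_eq c); [apply: (proj1 (Rdiv_le_1 _ _ c_gt0)) | lra].
have Yc j : Rabs (Y j / c) <= 1 by exact: div_c.
have muc : Rabs (expect p Y / c) <= 1 by apply/div_c/expect_abs_le.
apply: (Rle_trans _ (expect p (fun j => twopt_mgf (Y j / c) (s * c)))).
  apply: expect_le => // j; have -> : s * Y j = Y j / c * (s * c) by field; lra.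
  exact: exp_le_twopt_mgf.
have -> : s * expect p Y = expect p Y / c * (s * c) by field; lra.
by rewrite expect_twopt_mgf; apply: twopt_mgf_le_exp; nra.
Qed.

Lemma hoeffding_upper (n : nat) (t : R) : (0 < n)%N -> 0 <= t ->
  Pr (iid n p) (fun w => t <= emp_mean Y w - expect p Y) <=
  exp (- (INR n * t ^ 2 / (2 * c ^ 2))).
Proof.
move=> n_gt0 t0; have nR : 0 < INR n by apply/lt_0_INR/ltP.
set mu := expect p Y; pose s := t / c ^ 2.
have s0 : 0 <= s by apply: Rmult_le_pos => //; apply/Rlt_le/Rinv_0_lt_compat/pow_lt.
pose C := exp (- (s * INR n * (mu + t))).
have iid_distr_p := iid_distr n p_distr.
apply: (Rle_trans _ (expect (iid n p) (fun w => C * exp (s * Rsum (fun m => Y (w m)))))).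
  apply: Pr_le_expect => // w; first by apply/Rlt_le/Rmult_lt_0_compat; apply: exp_pos.
  rewrite /emp_mean -/mu => dev.
  have {}dev : INR n * t <= Rsum (fun m => Y (w m)) - INR n * mu.
    have -> : Rsum (fun m => Y (w m)) - INR n * mu =
              INR n * (/ INR n * Rsum (fun m => Y (w m)) - mu) by field; lra.
    exact: Rmult_le_compat_l (Rlt_le _ _ nR) dev.
  by rewrite /C -exp_plus -exp_0; apply: exp_le_compat; nra.
rewrite expect_scal // expect_iid_exp.
have := hoeffding_lemma s0; rewrite -/mu => mgf_bound.
have mgf0 : 0 <= expect p (fun j => exp (s * Y j)).
  by apply: expect_ge0 => // j; apply/Rlt_le/exp_pos.
have C0 : 0 <= C by apply/Rlt_le/exp_pos.
apply: Rle_trans (Rmult_le_compat_l _ _ _ C0 (pow_incr _ _ n (conj mgf0 mgf_bound))) _.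
rewrite exp_pow_INR /C -exp_plus; apply/exp_le_compat/Req_le.
by rewrite /s; field; lra.
Qed.

End Hoeffding.

Lemma hoeffding (J : finType) (p Y : J -> R) (c : R) (n : nat) (t : R) :
  is_distr p -> 0 < c -> (forall j, Rabs (Y j) <= c) -> (0 < n)%N -> 0 <= t ->
  Pr (iid n p) (fun w => t <= Rabs (emp_mean Y w - expect p Y)) <=
  2 * exp (- (INR n * t ^ 2 / (2 * c ^ 2))).
Proof.
move=> p_distr c_gt0 Yc n_gt0 t0.
have negYc j : Rabs (- Y j) <= c by rewrite Rabs_Ropp.
have upper := hoeffding_upper p_distr c_gt0 Yc n_gt0 t0.
have lower := hoeffding_upper p_distr c_gt0 negYc n_gt0 t0.
apply: (Rle_trans _ (Pr (iid n p) (fun w => t <= emp_mean Y w - expect p Y \/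
  t <= emp_mean (fun j => - Y j) w - expect p (fun j => - Y j)))).
  apply: Pr_mono => [|w]; first exact: iid_distr.
  by rewrite /emp_mean Rsum_opp expect_opp; split_Rabs; [right | left]; lra.
by apply: Rle_trans (Pr_or (iid_distr n p_distr) _ _) _; lra.
Qed.

Lemma Pr_exists_deviation_le (I J : finType) (p : J -> R) (Y : I -> J -> R) (c : R)
    (n : nat) :
  is_distr p -> 0 < c -> (forall i j, Rabs (Y i j) <= c) -> (0 < n)%N -> (0 < #|I|)%N ->
  Pr (iid n p) (fun w => exists i,
    2 * c * sqrt (ln (INR #|I|) / INR n) <= Rabs (emp_mean (Y i) w - expect p (Y i)))
  <= 2 / INR #|I|.
Proof.
move=> p_distr c_gt0 Yc n_gt0 I_gt0.
have nR : 0 < INR n by apply/lt_0_INR/ltP.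
set k := INR #|I|; have kR : 1 <= k by apply/(le_INR 1)/leP.
set t := 2 * c * sqrt (ln k / INR n).
have lnk0 : 0 <= ln k / INR n.
  by apply: (Rdiv_le_0_compat _ _ _ nR); rewrite -ln_1; apply ln_le; lra.
have t0 : 0 <= t by apply: Rmult_le_pos; [lra | exact: sqrt_pos].
have tail : INR n * t ^ 2 / (2 * c ^ 2) = ln k + ln k.
  have -> : t ^ 2 = 4 * c ^ 2 * (sqrt (ln k / INR n) * sqrt (ln k / INR n)).
    by rewrite /t; ring.
  by rewrite sqrt_sqrt //; field; lra.
apply: Rle_trans (Pr_exists (iid_distr n p_distr) _) _.
apply: Rle_trans (Rsum_le (fun i => hoeffding p_distr c_gt0 (Yc i) n_gt0 t0)) _.
rewrite Rsum_const -/k tail exp_Ropp exp_plus exp_ln; last lra.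
by apply: Req_le; field; lra.
Qed.

Lemma word_prob_distr (D k : nat) (A : mx D k) (x : 'I_k -> R) :
  word_topic A -> is_distr x -> is_distr (word_prob A x).
Proof.
case=> A0 A1 [x0 x1]; split=> [j|].
  by apply: Rsum_ge0 => t; apply: Rmult_le_pos.
rewrite /word_prob Rsum_swap -x1; apply: Rsum_ext => t.
by rewrite (Rsum_ext (G := fun j => x t * A j t)) ?Rsum_scal ?A1 => [|j]; ring.
Qed.

Lemma expect_word_prob_bias (D k : nat) (A : mx D k) (delta : R) (B : mx k D)
    (x : 'I_k -> R) i :
  feasible A delta B -> is_distr x ->
  Rabs (expect (word_prob A x) (B i) - x i) <= delta.
Proof.
move=> BA x_distr.
have kron : expect x (fun t => @idmx k i t) = x i.
  by rewrite /expect -(Rsum_kronecker x i); apply: Rsum_ext => t; apply: Rmult_comm.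
have prod : expect x (fun t => mxmul B A i t) = expect (word_prob A x) (B i).
  rewrite /expect /mxmul /word_prob.
  rewrite (Rsum_ext (G := fun t => Rsum (fun j => B i j * A j t * x t))) => [|t].
    rewrite Rsum_swap; apply: Rsum_ext => j.
    by rewrite Rmult_comm -Rsum_scal; apply: Rsum_ext => t; ring.
  by rewrite -Rsum_scal; apply: Rsum_ext => j; ring.
have -> : expect (word_prob A x) (B i) - x i =
          expect x (fun t => mxsub (mxmul B A) (@idmx k) i t).
  by rewrite -kron -prod /expect -Rsum_minus; apply: Rsum_ext => t; rewrite /mxsub; ring.
apply: expect_abs_le => // t; exact: Rle_trans (maxnorm_ge_entry _ i t) BA.
Qed.

Lemma feasible_zero_delta_ge1 (D k : nat) (A : mx D k) (delta : R) (B : mx k D) :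
  (0 < k)%N -> (forall i j, B i j = 0) -> feasible A delta B -> 1 <= delta.
Proof.
move=> k_gt0 B0 BA; pose i0 : 'I_k := Ordinal k_gt0.
have := Rle_trans _ _ _ (maxnorm_ge_entry _ i0 i0) BA.
rewrite /mxsub /mxmul /idmx eqxx (Rsum_ext (G := fun _ => 0)) => [|j].
  by rewrite Rsum_const Rmult_0_r Rminus_0_l Rabs_Ropp Rabs_R1.
by rewrite B0; ring.
Qed.

Lemma Rsum_counts (D n : nat) (w : {ffun 'I_n -> 'I_D}) (b : 'I_D -> R) :
  Rsum (fun j => b j * counts w j) = Rsum (fun m => b (w m)).
Proof.
have countsE j : counts w j = Rsum (fun m => if m \in [set m | w m == j] then 1 else 0).
  by rewrite Rsum_indicator Rmult_1_r.
pose G j := Rsum (fun m => (if w m == j then 1 else 0) * b j).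
rewrite (Rsum_ext (G := G)) => [|j].
  by rewrite Rsum_swap; apply: Rsum_ext => m; rewrite Rsum_kronecker.
rewrite countsE -Rsum_scal; apply: Rsum_ext => m.
by rewrite inE Rmult_comm.
Qed.

Definition threshold (k : nat) (tau : R) (x : 'I_k -> R) : 'I_k -> R :=
  fun i => if Rlt_dec (x i) tau then 0 else x i.

(* The overshoot must be strict: off the support it is what zeroes [xh i]. *)
Lemma threshold_l1_error (k r : nat) (xs xh : 'I_k -> R) (tau : R) :
  (forall i, 0 <= xs i) -> sparse r xs -> 0 <= tau ->
  (forall i, xh i - xs i < tau /\ xs i - xh i <= tau) ->
  l1dist (threshold tau xh) xs <= 2 * INR r * tau.
Proof.
move=> xs0 [S [Sr offS]] tau0 close.
apply: (Rle_trans _ (Rsum (fun i => if i \in S then 2 * tau else 0))).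
  apply: Rsum_le => i; have [over under] := close i; have := xs0 i.
  rewrite /threshold; case: (boolP (i \in S)) => iS;
    case: (Rlt_dec (xh i) tau) => /= lt_tau.
  - by split_Rabs; lra.
  - by split_Rabs; lra.
  - by rewrite (offS i iS) Rminus_0_r Rabs_R0; lra.
  - by rewrite (offS i iS) in over; lra.
rewrite Rsum_indicator; have : INR #|S| <= INR r by apply/le_INR/leP.
nra.
Qed.

Lemma threshold_budget (l r delta eps n L : R) :
  0 <= l -> 0 <= delta -> 0 <= r -> 0 < n -> 0 <= L -> eps > 4 * delta * r ->
  n >= 64 * l ^ 2 * r ^ 2 * L / eps ^ 2 ->
  2 * r * (2 * l * sqrt (L / n) + delta) <= eps.
Proof.
move=> l0 delta0 r0 n0 L0 eps_gt n_ge.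
have eps0 : 0 < eps by nra.
have n_eps : 64 * l ^ 2 * r ^ 2 * L <= n * eps ^ 2.
  exact: (proj1 (Rle_div_l _ _ _ (pow_lt _ 2 eps0)) (Rge_le _ _ n_ge)).
set s := sqrt (L / n); have s0 : 0 <= s by exact: sqrt_pos.
have ns2 : n * s ^ 2 = L by rewrite /s pow2_sqrt; [field | apply: Rdiv_le_0_compat]; lra.
have : (8 * r * l * s) ^ 2 <= eps ^ 2.
  apply: (Rmult_le_reg_l n) => //; rewrite -[in X in X <= _]ns2 in n_eps; nra.
nra.
Qed.

Lemma TLI_counts (D k n : nat) (B : mx k D) (l delta : R) (w : {ffun 'I_n -> 'I_D}) :
  TLI n B l delta (counts w) =
  threshold (2 * l * sqrt (ln (INR k) / INR n) + delta) (fun i => emp_mean (B i) w).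
Proof. by apply: functional_extensionality => i; rewrite /TLI /threshold Rsum_counts. Qed.

Lemma success_probE (D k n : nat) (A : mx D k) (B : mx k D) (l delta eps : R)
    (xs : 'I_k -> R) :
  success_prob n A B l delta eps xs =
  Pr (iid n (word_prob A xs)) (fun w => l1dist (TLI n B l delta (counts w)) xs <= eps).
Proof.
apply: Rsum_ext => w; congr (_ * _).
by case: Rle_dec; case: excluded_middle_informative.
Qed.

Definition accurate (D k n : nat) (B : mx k D) (xs : 'I_k -> R) (tau : R)
    (w : {ffun 'I_n -> 'I_D}) : Prop :=
  forall i, emp_mean (B i) w - xs i < tau /\ xs i - emp_mean (B i) w <= tau.

Lemma zero_inverse_accurate (D k n : nat) (A : mx D k) (B : mx k D) (xs : 'I_k -> R)
    (delta t : R) (w : {ffun 'I_n -> 'I_D}) :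
  (forall i j, B i j = 0) -> feasible A delta B -> is_distr xs -> 0 <= t ->
  accurate B xs (t + delta) w.
Proof.
move=> B0 BA xs_distr t0 i.
have k_gt0 := is_distr_ord_gt0 xs_distr.
have delta1 := feasible_zero_delta_ge1 k_gt0 B0 BA.
have -> : emp_mean (B i) w = 0.
  rewrite /emp_mean (Rsum_ext (G := fun _ => 0)) ?Rsum_const => [|m]; last exact: B0.
  by ring.
have : xs i <= 1 by rewrite -xs_distr.2; exact: Rsum_ge_term xs_distr.1.
by have := xs_distr.1 i; lra.
Qed.

Lemma Pr_inaccurate_le (D k n : nat) (A : mx D k) (B : mx k D) (xs : 'I_k -> R)
    (delta l : R) :
  (0 < n)%N -> word_topic A -> feasible A delta B -> maxnorm B = l -> is_distr xs ->
  Pr (iid n (word_prob A xs))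
    (fun w => ~ accurate B xs (2 * l * sqrt (ln (INR k) / INR n) + delta) w)
  <= 2 / INR k.
Proof.
move=> n_gt0 A_topic BA Bl xs_distr.
have k_gt0 := is_distr_ord_gt0 xs_distr.
have p_distr := word_prob_distr A_topic xs_distr.
have B_le i j : Rabs (B i j) <= l by rewrite -Bl; exact: maxnorm_ge_entry.
set t := 2 * l * sqrt (ln (INR k) / INR n).
have [l_eq0|l_gt0] : l = 0 \/ 0 < l by have := maxnorm_ge0 B; lra.
  have B0 i j : B i j = 0 by have := B_le i j; rewrite l_eq0; split_Rabs; lra.
  have t0 : t = 0 by rewrite /t l_eq0; ring.
  rewrite (Pr_none (iid_distr n p_distr)) => [|w]; last first.
    by apply; rewrite t0; apply: zero_inverse_accurate B0 BA xs_distr (Rle_refl 0).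
  by apply: Rdiv_le_0_compat; [lra | apply/lt_0_INR/ltP].
have := Pr_exists_deviation_le p_distr l_gt0 B_le n_gt0.
rewrite card_ord => /(_ k_gt0) deviation; apply: (Rle_trans _ _ _ _ deviation).
apply: Pr_mono => [|w not_acc]; first exact: iid_distr.
apply: NNPP => no_dev; apply: not_acc => i.
have := expect_word_prob_bias i BA xs_distr.
have /Rnot_le_lt : ~ t <= Rabs (emp_mean (B i) w - expect (word_prob A xs) (B i)).
  by move=> dev; apply: no_dev; exists i.
by split_Rabs; lra.
Qed.

Theorem theorem4p1 (D k : nat) (A : mx D k) (delta l : R) (B : mx k D)
  (r : nat) (xs : 'I_k -> R) (eps : R) (n : nat) :
  word_topic A ->
  0 <= delta ->
  is_lambda_delta A delta l ->
  min_var_inverse A delta l B ->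
  in_simplex xs ->
  sparse r xs ->
  eps > 4 * delta * INR r ->
  (0 < n)%N ->
  INR n >= 64 * l ^ 2 * INR r ^ 2 * ln (INR k) / eps ^ 2 ->
  success_prob n A B l delta eps xs >= 1 - 2 / INR k.
Proof.
move=> A_topic delta0 _ [BA Bl] xs_distr xs_sparse eps_gt n_gt0 n_ge.
have nR : 0 < INR n by apply/lt_0_INR/ltP.
have lnk0 : 0 <= ln (INR k).
  rewrite -ln_1; apply ln_le; first lra.
  by apply: (le_INR 1); apply/leP; exact: is_distr_ord_gt0 xs_distr.
have l0 : 0 <= l by rewrite -Bl; exact: maxnorm_ge0.
have doc_distr := iid_distr n (word_prob_distr A_topic xs_distr).
set tau := 2 * l * sqrt (ln (INR k) / INR n) + delta.
have tau0 : 0 <= tau by have := sqrt_pos (ln (INR k) / INR n); rewrite /tau; nra.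
have success (w : {ffun 'I_n -> 'I_D}) :
    accurate B xs tau w -> l1dist (TLI n B l delta (counts w)) xs <= eps.
  move=> acc; apply: Rle_trans (threshold_budget l0 delta0 (pos_INR r) nR lnk0 eps_gt n_ge).
  by rewrite TLI_counts; exact: threshold_l1_error xs_distr.1 xs_sparse tau0 acc.
apply: Rle_ge; rewrite success_probE; apply: Rle_trans (Pr_mono doc_distr success).
have := Pr_inaccurate_le n_gt0 A_topic BA Bl xs_distr; rewrite -/tau.
by rewrite (Pr_compl doc_distr (accurate B xs tau)); lra.
Qed.
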